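(* Let $a,b,c$ be positive integers and $r=[2a,2b,-2c]$. Then all zeros of $\Delta_{K(r)}(t)$ are real if and only if $a\ge c$.
   Context: For a finite sequence $r=[2a_1,2a_2,\dots,2a_n]$ of nonzero even integers, $K(r)$ denotes the 2-bridge knot or link whose associated rational number has the even continued fraction expansion $1/(2a_1-1/(2a_2-\cdots-1/(2a_n)))$ ($K(r)$ is a knot if $n$ is even and a 2-component link if $n$ is odd). Let $M(r)$ be the $n\times n$ integer matrix whose $(k,k)$-entry is $a_k$ ($1\le k\le n$), whose $(k,k+1)$-entry is $1$ ($1\le k\le n-1$), and whose other entries are $0$; it is a Seifert matrix of $K(r)$, and $\Delta_{K(r)}(t)=\det(tM(r)-M(r)^T)$ is the (reduced) Alexander polynomial of $K(r)$ (well defined up to sign). *)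

From HB Require Import structures.
From mathcomp Require Import all_boot all_order all_algebra all_field.
Set Implicit Arguments. Unset Strict Implicit. Unset Printing Implicit Defensive.
Import Order.TTheory GRing.Theory Num.Theory.
Local Open Scope ring_scope.

(* r = [2a_1; ...; 2a_n] : a sequence of nonzero even integers.
   seifert_mx r = M(r): (k,k)-entry a_k = r_k / 2, (k,k+1)-entry 1, else 0. *)
Definition seifert_mx (r : seq int) : 'M[int]_(size r) :=
  \matrix_(i < size r, j < size r)
    (if i == j then (r`_i %/ 2)%Z
     else if (j == i.+1 :> nat) then 1 else 0).

Definition alexander_poly (r : seq int) : {poly int} :=
  \det (\matrix_(i < size r, j < size r)
          ('X * (seifert_mx r i j)%:P - (seifert_mx r j i)%:P)).

Definition alexander_polyC (r : seq int) : {poly algC} :=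
  map_poly (fun z : int => z%:~R) (alexander_poly r).

From HB Require Import structures.
From mathcomp Require Import all_boot all_order all_algebra all_field.
From mathcomp Require Import ring zify.
Import Order.TTheory GRing.Theory Num.Theory.
Local Open Scope ring_scope.

(* Proof of Proposition 8.5.  For r = [2x, 2y, 2w] the Seifert matrix is
   3 x 3 and a direct cofactor expansion gives
       Delta_{K(r)}(t) = (t - 1) * (xyw (t - 1)^2 + (x + w) t).
   The factor t - 1 only has the real root 1, and the second factor is a
   real quadratic e t^2 + (s - 2e) t + e (with e = xyw, s = x + w) whose
   discriminant is s (s - 4e).  Over the algebraic complex numbers a real
   quadratic has only real roots iff its discriminant is nonnegative, so
   all zeros of Delta are real iff (x + w)(x + w - 4xyw) >= 0.  For
   (x, y, w) = (a, b, -c) this reads (a - c)(a - c + 4abc) >= 0, and as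
   the second factor is positive this is equivalent to c <= a. *)

Section RealQuadratic.

(* A quadratic alpha z^2 + beta z + gamma over a numeric closed field, with
   real leading and linear coefficients, and its discriminant (the constant
   term need not be assumed real: it enters only through the discriminant). *)
Variables (F : numClosedFieldType) (alpha beta gamma : F).
Hypotheses (alphaR : alpha \is Num.real) (betaR : beta \is Num.real)
  (alpha_neq0 : alpha != 0).

Let delta := beta ^+ 2 - 4 * alpha * gamma.
Let root_plus := (- beta + sqrtC delta) / (2 * alpha).
Let root_minus := (- beta - sqrtC delta) / (2 * alpha).

Lemma quadratic_factor (z : F) :
  alpha * z ^+ 2 + beta * z + gamma =
  alpha * ((z - root_plus) * (z - root_minus)).
Proof.
have -> : alpha * ((z - root_plus) * (z - root_minus)) =
    alpha * z ^+ 2 + beta * z + (beta ^+ 2 - sqrtC delta ^+ 2) / (4 * alpha).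
  by rewrite /root_plus /root_minus; field.
by rewrite sqrtCK /delta; field.
Qed.

Lemma quadratic_roots_real :
  (forall z, alpha * z ^+ 2 + beta * z + gamma = 0 -> z \is Num.real)
  <-> 0 <= delta.
Proof.
split=> [all_real | delta_ge0].
- have /all_real root_plusR : alpha * root_plus ^+ 2 + beta * root_plus
      + gamma = 0 by rewrite quadratic_factor subrr !mul0r mulr0.
  have sqrt_eq : sqrtC delta = 2 * alpha * root_plus + beta.
    by rewrite /root_plus; field.
  have sqrtR : sqrtC delta \is Num.real.
    by rewrite sqrt_eq rpredD // rpredM // rpredM // realn.
  by rewrite -(sqrtCK delta) -realEsqr.
- move=> z; rewrite quadratic_factor => /eqP.
  rewrite !mulf_eq0 (negbTE alpha_neq0) /= !subr_eq0 => /orP[] /eqP ->;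
    by rewrite rpredM ?rpredV ?rpredM ?rpredD ?rpredB ?rpredN
               ?realn ?sqrtC_real ?rpred1.
Qed.

End RealQuadratic.

Lemma det3 (R : comNzRingType) (f : nat -> nat -> R) :
  \det (\matrix_(i < 3, j < 3) f i j) =
    f 0 0 * (f 1 1 * f 2 2 - f 1 2 * f 2 1)
  - f 0 1 * (f 1 0 * f 2 2 - f 1 2 * f 2 0)
  + f 0 2 * (f 1 0 * f 2 1 - f 1 1 * f 2 0).
Proof.
rewrite (expand_det_row _ 0) !big_ord_recl big_ord0 /cofactor.
do 2! rewrite !(expand_det_row _ 0) !big_ord_recl !big_ord0 /cofactor.
by rewrite !det_mx00 /= !mxE /= /bump /=; ring.
Qed.

Lemma alexander_poly_length3 (x y w : int) :
  alexander_poly [:: 2 * x; 2 * y; 2 * w] =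
  ('X - 1) * ((x * y * w)%:P * ('X - 1) ^+ 2 + (x + w)%:P * 'X).
Proof.
rewrite /alexander_poly; set r := [:: _; _; _].
pose M (i j : nat) : int :=
  if i == j then (r`_i %/ 2)%Z else if j == i.+1 then 1 else 0.
have -> : \matrix_(i < size r, j < size r)
            ('X * (seifert_mx r i j)%:P - (seifert_mx r j i)%:P)
          = \matrix_(i < 3, j < 3) ('X * (M i j)%:P - (M j i)%:P).
  by apply/matrixP => i j; rewrite !mxE.
rewrite (@det3 _ (fun i j => 'X * (M i j)%:P - (M j i)%:P)) /M /= !mulKz //.
by rewrite !(polyCD, polyCM) polyC1 polyC0; ring.
Qed.

Lemma root_alexander_polyC_length3 (x y w : int) (z : algC) :
  root (alexander_polyC [:: 2 * x; 2 * y; 2 * w]) z =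
  (z == 1) || ((x * y * w)%:~R * z ^+ 2
               + (x + w - 2 * (x * y * w))%:~R * z + (x * y * w)%:~R == 0).
Proof.
rewrite /root /alexander_polyC alexander_poly_length3.
rewrite !(rmorphM, rmorphB, rmorphD, rmorphXn) /= map_polyX rmorph1 !map_polyC.
rewrite !hornerE /= mulf_eq0 subr_eq0; congr (_ || (_ == 0)); ring.
Qed.

Lemma alexander_length3_real_roots (x y w : int) :
  x * y * w != 0 ->
  (forall z : algC,
      root (alexander_polyC [:: 2 * x; 2 * y; 2 * w]) z -> z \is Num.real)
  <-> 0 <= (x + w) * (x + w - 4 * (x * y * w)).
Proof.
move=> xyw_neq0; set e := x * y * w.
have discr : (x + w - 2 * e)%:~R ^+ 2 - 4 * e%:~R * e%:~R
             = ((x + w) * (x + w - 4 * e))%:~R :> algC.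
  by rewrite !(rmorphB, rmorphD, rmorphM) /=; ring.
rewrite -(ler0z algC) -discr -quadratic_roots_real ?realz ?intr_eq0 //.
split=> all_real z.
- move=> quad0; apply: all_real.
  by rewrite root_alexander_polyC_length3 quad0 eqxx orbT.
- rewrite root_alexander_polyC_length3 => /orP[/eqP -> | /eqP]; first exact: rpred1.
  exact: all_real.
Qed.

Theorem proposition8p5 (a b c : nat) (ha : (0 < a)%N) (hb : (0 < b)%N)
    (hc : (0 < c)%N) :
  (forall z : algC,
      root (alexander_polyC [:: 2 * a%:Z; 2 * b%:Z; - (2 * c%:Z)]) z ->
      z \is Num.real)
  <-> (c <= a)%N.
Proof.
rewrite -mulrN alexander_length3_real_roots; last first.
  by rewrite !mulf_neq0 ?oppr_eq0 //; lia.
have second_factor_pos : 0 < a%:Z + - c%:Z - 4 * (a%:Z * b%:Z * - c%:Z).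
  have ab_pos : (0 < a * b)%N by rewrite muln_gt0 ha hb.
  by nia.
by rewrite pmulr_lge0 // subr_ge0 lez_nat.
Qed.
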